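(* Let $M$ be a $*$-left Ehresmann monoid with basis $H$, and suppose $m\in M$ has $H$-canonical form of length $n$. If $m=h_1\cdots h_n$ with $h_i\in H$ for $1\le i\le n$, then \[m=\big(h_1(h_2\cdots h_n)^+\big)\big(h_2(h_3\cdots h_n)^+\big)\cdots\big(h_{n-1}h_n^+\big)h_n\] is the $H$-canonical form of $m$ (in particular each displayed factor lies in $H$).
   Context: A $*$-left Ehresmann monoid is a monoid $M$ with unary operations $+,*$ such that $x^+x=x$, $(x^+y^+)^+=x^+y^+$, $x^+y^+=y^+x^+$, $(xy)^+=(xy^+)^+$, $xx^*=x$, $(x^* )^*=x^*$, $x^*y^*=y^*x^*$, $(xy^* )^*y^*=(xy^* )^*$, $(x^* )^+=x^*$, $(x^+)^*=x^+$. Projections: $E=\{a^+\}=\{a^*\}$, ordered by $e\le f$ iff $ef=e$; $\sigma$ is the least monoid congruence containing $E\times E$. $H\subseteq M$ is atomic if: (H1) $E\subseteq H$; (H2) $h\in H,e\in E$ imply $he\in H$ and $(he)^*=h^*e$; (H3) if $h\in H$, $k\in H\setminus E$, $h^*\ge k^+$ then $hk\in H$ and $(hk)^*=k^*$; (H4) every $m\in M$ is $\sigma$-related to some $h\in H$; (H5) if $h,k,w\in H$, $hk\,\sigma\,w$ and $k^*=w^*$, then some $u\in H$ has $u\,\sigma\,h$ and $u^*\ge k^+$. An expression $m=h_1\cdots h_n$ ($n\ge1$, $h_i\in H$) is in $H$-canonical form if $h_i^*<h_{i+1}^+$ for $1\le i<n$ and $h_i\notin E$ for $2\le i\le n$.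 $M$ has $H$-canonical forms if every element has exactly one expression in $H$-canonical form. $H$ is a basis of $M$ if $H$ generates $M$ as a semigroup, $H$ is atomic and $M$ has $H$-canonical forms. *)

From Stdlib Require Import List.
Import ListNotations.
Set Implicit Arguments.

Record SLEMonoid := {
  car :> Type;
  mul : car -> car -> car;
  one : car;
  plus : car -> car;
  star : car -> car;
  mul_assoc : forall x y z, mul x (mul y z) = mul (mul x y) z;
  mul_1l : forall x, mul one x = x;
  mul_1r : forall x, mul x one = x;
  ax1 : forall x, mul (plus x) x = x;
  ax2 : forall x y, plus (mul (plus x) (plus y)) = mul (plus x) (plus y);
  ax3 : forall x y, mul (plus x) (plus y) = mul (plus y) (plus x);
  ax4 : forall x y, plus (mul x y) = plus (mul x (plus y));
  ax5 : forall x, mul x (star x) = x;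
  ax6 : forall x, star (star x) = star x;
  ax7 : forall x y, mul (star x) (star y) = mul (star y) (star x);
  ax8 : forall x y, mul (star (mul x (star y))) (star y) = star (mul x (star y));
  ax9 : forall x, plus (star x) = star x;
  ax10 : forall x, star (plus x) = plus x
}.

Section Defs.
Variable M : SLEMonoid.

Local Notation "x * y" := (mul M x y).

Definition inE (e : M) : Prop := exists a : M, e = plus M a.

Definition ple (e f : M) : Prop := e * f = e.
Definition plt (e f : M) : Prop := ple e f /\ e <> f.

Definition monoid_congruence (R : M -> M -> Prop) : Prop :=
  (forall x, R x x) /\ (forall x y, R x y -> R y x) /\
  (forall x y z, R x y -> R y z -> R x z) /\
  (forall x y z, R x y -> R (z * x) (z * y) /\ R (x * z) (y * z)).

Definition sigma (x y : M) : Prop :=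
  forall R, monoid_congruence R -> (forall e f, inE e -> inE f -> R e f) -> R x y.

Definition prod (s : list M) : M := fold_right (mul M) (one M) s.

Definition atomic (H : M -> Prop) : Prop :=
  (forall e, inE e -> H e) /\
  (forall h e, H h -> inE e -> H (h * e) /\ star M (h * e) = star M h * e) /\
  (forall h k, H h -> H k -> ~ inE k -> ple (plus M k) (star M h) ->
              H (h * k) /\ star M (h * k) = star M k) /\
  (forall m, exists h, H h /\ sigma m h) /\
  (forall h k w, H h -> H k -> H w -> sigma (h * k) w -> star M k = star M w ->
              exists u, H u /\ sigma u h /\ ple (plus M k) (star M u)).

Definition canonical_form (H : M -> Prop) (hs : list M) (m : M) : Prop :=
  hs <> [] /\ Forall H hs /\ prod hs = m /\
  (forall i, S i < length hs ->
     plt (star M (nth i hs (one M))) (plus M (nth (S i) hs (one M)))) /\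
  (forall i, 1 <= i < length hs -> ~ inE (nth i hs (one M))).

Definition has_canonical_forms (H : M -> Prop) : Prop :=
  forall m, exists! hs, canonical_form H hs m.

Definition generates_semigroup (H : M -> Prop) : Prop :=
  forall m, exists hs, hs <> [] /\ Forall H hs /\ prod hs = m.

Definition basis (H : M -> Prop) : Prop :=
  generates_semigroup H /\ atomic H /\ has_canonical_forms H.

Fixpoint reform (s : list M) : list M :=
  match s with
  | [] => []
  | [h] => [h]
  | h :: t => (h * plus M (prod t)) :: reform t
  end.

End Defs.

(* Rewriting h_i as h_i (h_{i+1} ... h_n)^+ keeps every factor in H (by (H2)),
   keeps the product (since x^+ x = x), and makes consecutive factors satisfy the
   weak inequalities h_i'^* <= h_{i+1}'^+.  If the result were not in canonical
   form, one of these inequalities would be an equality, or some later factor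
   would be a projection; in either case two adjacent factors multiply into H by
   (H2) or (H3), giving a shorter H-expression of m.  Repeatedly reducing it
   yields a canonical form of m shorter than n, against uniqueness. *)

From Stdlib Require Import List Lia Classical Wf_nat.
Import ListNotations.
Set Implicit Arguments.

Lemma split_adjacent (A : Type) (l : list A) (d : A) i : S i < length l ->
  exists l1 l2, l = l1 ++ nth i l d :: nth (S i) l d :: l2.
Proof.
  revert l; induction i as [|i IH]; intros l Hl.
  - destruct l as [|a [|b l2]]; simpl in Hl; try lia.
    now exists [], l2.
  - destruct l as [|a l]; simpl in Hl; [lia|].
    destruct (IH l) as [l1 [l2 E]]; [lia|].
    exists (a :: l1), l2; simpl; now rewrite <- E.
Qed.

Section Reform.
Variable M : SLEMonoid.
Variable H : M -> Prop.
Local Notation "x * y" := (mul M x y).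
Local Notation o := (one M).

Definition is_expression (L : list M) (m : M) : Prop :=
  L <> [] /\ Forall H L /\ prod M L = m.

Lemma plus_one : plus M o = o.
Proof. pose proof (ax1 M o) as E; now rewrite mul_1r in E. Qed.

Lemma plus_plus x : plus M (plus M x) = plus M x.
Proof. pose proof (ax2 M x o) as E; now rewrite plus_one, !mul_1r in E. Qed.

Lemma plus_idem x : plus M x * plus M x = plus M x.
Proof. pose proof (ax1 M (plus M x)) as E; now rewrite plus_plus in E. Qed.

Lemma prod_app l1 l2 : prod M (l1 ++ l2) = prod M l1 * prod M l2.
Proof.
  induction l1 as [|a l1 IH]; simpl.
  - now rewrite mul_1l.
  - now rewrite IH, mul_assoc.
Qed.

Lemma reform_cons2 h x r :
  reform M (h :: x :: r) = (h * plus M (prod M (x :: r))) :: reform M (x :: r).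
Proof. reflexivity. Qed.

Lemma length_reform L : length (reform M L) = length L.
Proof.
  induction L as [|h [|x r] IH]; try reflexivity.
  rewrite reform_cons2; simpl in *; now rewrite IH.
Qed.

Lemma prod_reform L : prod M (reform M L) = prod M L.
Proof.
  induction L as [|h [|x r] IH]; try reflexivity.
  rewrite reform_cons2; simpl in *; now rewrite IH, <- mul_assoc, ax1.
Qed.

Lemma plus_head_reform x r :
  plus M (nth 0 (reform M (x :: r)) o) = plus M (prod M (x :: r)).
Proof.
  destruct r as [|y r]; simpl.
  - now rewrite mul_1r.
  - symmetry; apply ax4.
Qed.

Section UnderH2.
Hypothesis H2 : forall h e, H h -> inE M e ->
  H (h * e) /\ star M (h * e) = star M h * e.

Lemma Forall_reform L : Forall H L -> Forall H (reform M L).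
Proof.
  induction 1 as [|h [|x r] Hh F IH]; try now constructor.
  rewrite reform_cons2; constructor; [|exact IH].
  apply H2; [exact Hh | now eexists].
Qed.

Lemma reform_expression L m : is_expression L m -> is_expression (reform M L) m.
Proof.
  intros [NE [F P]]; split; [|split].
  - intro E; apply NE, length_zero_iff_nil; rewrite <- length_reform, E; reflexivity.
  - now apply Forall_reform.
  - now rewrite prod_reform.
Qed.

Lemma reform_chain L : Forall H L -> forall i, S i < length (reform M L) ->
  ple M (star M (nth i (reform M L) o)) (plus M (nth (S i) (reform M L) o)).
Proof.
  induction 1 as [|h [|x r] Hh F IH]; intros i Hi;
    rewrite length_reform in Hi; simpl in Hi; try lia.
  rewrite reform_cons2; destruct i as [|i].
  - change (ple M (star M (h * plus M (prod M (x :: r))))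
      (plus M (nth 0 (reform M (x :: r)) o))).
    rewrite plus_head_reform.
    destruct (@H2 h (plus M (prod M (x :: r)))) as [_ ->]; [exact Hh | now eexists |].
    unfold ple; now rewrite <- mul_assoc, plus_idem.
  - apply IH; rewrite length_reform; simpl in *; lia.
Qed.

Section UnderH3.
Hypothesis H3 : forall h k, H h -> H k -> ~ inE M k -> ple M (plus M k) (star M h) ->
  H (h * k) /\ star M (h * k) = star M k.

Lemma merge_adjacent_expression R m j : is_expression R m -> S j < length R ->
  H (nth j R o * nth (S j) R o) ->
  exists R', length R' < length R /\ is_expression R' m.
Proof.
  intros [_ [F P]] Hj.
  destruct (split_adjacent R o Hj) as [l1 [l2 E]].
  revert E; generalize (nth j R o) (nth (S j) R o); intros a b -> Hab.
  exists (l1 ++ (a * b) :: l2); split; [|split; [|split]].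
  - rewrite !length_app; simpl; lia.
  - now destruct l1.
  - apply Forall_app in F as [F1 F2].
    apply Forall_app; split; [exact F1|].
    constructor; [exact Hab | exact (Forall_inv_tail (Forall_inv_tail F2))].
  - rewrite <- P, !prod_app; simpl; now rewrite (mul_assoc M a).
Qed.

Lemma mul_in_H_of_star_eq_plus h k : H h -> H k -> star M h = plus M k -> H (h * k).
Proof.
  intros Hh Hk Ehk.
  destruct (classic (inE M k)) as [Ek | Nk].
  - now apply H2.
  - apply H3; auto; unfold ple; rewrite Ehk; apply plus_idem.
Qed.

Lemma reform_canonical_or_shorter L m : is_expression L m ->
  canonical_form M H (reform M L) m \/
  exists L', length L' < length L /\ is_expression L' m.
Proof.
  intros EL; pose proof (reform_expression EL) as ER.
  pose proof (reform_chain (proj1 (proj2 EL))) as chain.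
  rewrite <- (length_reform L); set (R := reform M L) in *.
  pose proof ER as [NE [F P]].
  assert (HR : forall i, i < length R -> H (nth i R o))
    by (intros; rewrite Forall_forall in F; now apply F, nth_In).
  destruct (classic (exists i, S i < length R /\ star M (nth i R o) = plus M (nth (S i) R o)))
    as [[i [Hi Ei]] | Nstrict].
  { right; apply (merge_adjacent_expression (j:=i) ER Hi).
    apply mul_in_H_of_star_eq_plus; auto; apply HR; lia. }
  destruct (classic (exists i, 1 <= i < length R /\ inE M (nth i R o)))
    as [[[|i] [Hi Ei]] | Nproj]; [lia| |].
  { right; apply (merge_adjacent_expression (j:=i) ER); [lia|].
    apply H2; [apply HR; lia | exact Ei]. }
  left; split; [exact NE|]; split; [exact F|]; split; [exact P|]; split.
  - intros i Hi; split; [now apply chain|].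
    intro Ei; apply Nstrict; eauto.
  - intros i Hi Ei; apply Nproj; eauto.
Qed.

Lemma canonical_form_of_expression L m : is_expression L m ->
  exists cs, canonical_form M H cs m /\ length cs <= length L.
Proof.
  induction L as [L IH] using (induction_ltof1 _ (@length M)); intro EL.
  destruct (reform_canonical_or_shorter EL) as [C | [L' [Hlt EL']]].
  - exists (reform M L); split; [exact C | now rewrite length_reform].
  - destruct (IH L' Hlt EL') as [cs [C Hle]]; exists cs; split; [exact C | lia].
Qed.

Lemma canonical_form_length_minimal cs L m :
  has_canonical_forms M H -> canonical_form M H cs m -> is_expression L m ->
  length cs <= length L.
Proof.
  intros U Ccs EL.
  destruct (canonical_form_of_expression EL) as [cs' [Ccs' Hle]].
  destruct (U m) as [c0 [_ Uc0]].
  replace cs with cs' by (rewrite <- (Uc0 cs Ccs); symmetry; now apply Uc0).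
  exact Hle.
Qed.

End UnderH3.
End UnderH2.
End Reform.

Theorem mainTheorem10 (M : SLEMonoid) (H : M -> Prop) :
  basis M H ->
  forall (m : M) (n : nat),
    (exists cs, canonical_form M H cs m /\ length cs = n) ->
    forall hs : list M, length hs = n -> Forall H hs -> prod M hs = m ->
      canonical_form M H (reform M hs) m.
Proof.
  intros [_ [[_ [H2 [H3 _]]] U]] m n [cs [Ccs Hcs]] hs Hhs F P.
  assert (E : is_expression M H hs m).
  { split; [|now split].
    intros ->; destruct Ccs as [NE _]; destruct cs; [congruence | simpl in *; lia]. }
  destruct (reform_canonical_or_shorter H2 H3 E) as [C | [L' [Hlt E']]]; [exact C|].
  pose proof (canonical_form_length_minimal H2 H3 U Ccs E'); lia.
Qed.
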